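(* Let $B(X)\in\mathbb Z[X]$ be monic and irreducible, and suppose $B$ has a non-real root $\beta$ such that every root of $B$ other than $\beta$ and $\overline\beta$ has absolute value strictly less than $|\beta|$. Let $\alpha\in\mathbb Z$ with $|\alpha|>1$, and suppose there are coprime positive integers $p,q$ with $\alpha^{2p}=(\beta\overline\beta)^q$. Then $B(X)=X^2+aX+N$ for some $a\in\mathbb Z$ and positive integer $N$ with $a^2-4N<0$, and there is an integer $b>1$ with $N=b^p$ and $|\alpha|=b^{q/2}$; in particular, if $b$ is not a perfect square then $q$ is even. *)

From HB Require Import structures.
From mathcomp Require Export all_boot all_order all_algebra all_field.
Set Implicit Arguments. Unset Strict Implicit. Unset Printing Implicit Defensive.

From mathcomp Require Import all_boot all_order all_algebra all_field.
From mathcomp Require Import ring polyorder.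
Import Order.TTheory GRing.Theory Num.Theory.
Set Implicit Arguments. Unset Strict Implicit. Unset Printing Implicit Defensive.
Local Open Scope ring_scope.

(* Write B_C for B viewed as a complex polynomial.
   1. B is irreducible over Q (Gauss), hence the minimal polynomial of each of
      its complex roots: a rational polynomial vanishing at one root of B
      vanishes at all of them, and B is separable.
   2. The rational polynomial H(X) = Res_Y(B(Y), X^q Y^q - alpha^(2p)) vanishes
      at x <> 0 iff (x y)^q = alpha^(2p) for some root y of B.  H vanishes at
      beta (take y = conj beta), so by step 1 at every root g of B: then
      |g| |y| = |beta|^2 for a root y, and the dominance of |beta| forces
      g = beta or g = conj beta.
   3. Being separable with exactly these two roots, B_C = (X - beta)(X - conj beta),
      so B = X^2 + aX + N with a = -(beta + conj beta), N = |beta|^2, and the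
      discriminant is -|beta - conj beta|^2 < 0.
   4. Arithmetic: N^q = (alpha^2)^p with p, q coprime gives b with N = b^p and
      alpha^2 = b^q; if q is odd, then b^q = |alpha|^2 with 2, q coprime makes
      b a square. *)

Lemma map_poly_ratr_int (u : {poly int}) :
  map_poly ratr (map_poly (intr : int -> rat) u) = map_poly intr u :> {poly algC}.
Proof. by rewrite -map_poly_comp; apply: eq_map_poly => c /=; rewrite ratr_int. Qed.

(* An irreducible rational polynomial divides every rational polynomial that
   shares one of its complex roots (it is the minimal polynomial of that root). *)
Lemma irreducible_rat_dvdp (P r : {poly rat}) (x : algC) :
  irreducible_poly P -> root (map_poly ratr P) x -> root (map_poly ratr r) x ->
  P %| r.
Proof.
move=> irrP rootP rootr.
have [m [Dm _] min_m] := minCpolyP x.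
have m_size : size m != 1.
  by have := size_minCpoly x; rewrite Dm size_map_poly; case: ltngtP.
have /irrP m_eqp : m %| P by rewrite -min_m.
by rewrite -(eqp_dvdl _ (m_eqp m_size)) -min_m.
Qed.

(* Rational relations satisfied by one root of an irreducible polynomial are
   satisfied by all its roots; this replaces Galois conjugation. *)
Lemma irreducible_rat_root_transfer (P r : {poly rat}) (x y : algC) :
  irreducible_poly P -> root (map_poly ratr P) x -> root (map_poly ratr P) y ->
  root (map_poly ratr r) x -> root (map_poly ratr r) y.
Proof.
move=> irrP Px Py rx; have := irreducible_rat_dvdp irrP Px rx.
by rewrite -(dvdp_map (ratr : {rmorphism rat -> algC})) => /root_dvdp; apply.
Qed.

(* In characteristic 0 an irreducible polynomial is separable: its gcd with
   its (nonzero, smaller) derivative cannot be the polynomial itself. *)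
Lemma irreducible_rat_separable (P : {poly rat}) :
  irreducible_poly P -> separable_poly P.
Proof.
move=> irrP; rewrite unlock /coprimep.
have P_gt1 : (1 < size P)%N := irrP.1.
have dP_size : size P^`() = (size P).-1 := size_deriv P.
have [g_eqp1 | g_eqpP] := irredp_XsubCP irrP (dvdp_gcdl P P^`()).
  by rewrite (eqp_size g_eqp1) size_poly1.
have P_dvd_dP : P %| P^`() by rewrite -(eqp_dvdl _ g_eqpP) dvdp_gcdr.
have dP_neq0 : P^`() != 0 by rewrite -size_poly_gt0 dP_size -subn1 subn_gt0.
by have := dvdp_leq dP_neq0 P_dvd_dP; rewrite dP_size leqNgt ltn_predL (ltnW P_gt1).
Qed.

(* Res_Y(P(Y), X^q Y^q - A), a rational polynomial in X. *)
Definition pow_resultant (P : {poly rat}) (A : rat) (q : nat) : {poly rat} :=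
  resultant (map_poly polyC P) (('X^q : {poly rat}) *: 'X^q - (A%:P)%:P).

(* Away from 0, the roots of pow_resultant P A q are the x such that x y is a
   q-th root of A for some root y of P: the resultant of the specialisations
   at x vanishes iff they have a common root. *)
Lemma root_pow_resultant (P : {poly rat}) (A : rat) (q : nat) (x : algC) :
  (0 < q)%N -> x != 0 -> P \is monic ->
  root (map_poly ratr (pow_resultant P A q)) x <->
  exists2 y, root (map_poly ratr P) y & (x * y) ^+ q = ratr A.
Proof.
move=> q_gt0 x_neq0 monP.
pose evx : {rmorphism {poly rat} -> algC} := horner_eval x \o map_poly ratr.
have evxE u : evx u = (map_poly ratr u).[x] by [].
pose Q : {poly {poly rat}} := ('X^q : {poly rat}) *: 'X^q - (A%:P)%:P.
have lead_Q : lead_coef Q = 'X^q.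
  rewrite lead_coefDl ?lead_coefZ ?lead_coefXn ?mulr1 //.
  rewrite size_opp size_scale ?monic_neq0 ?monicXn // size_polyC.
  by rewrite (leq_ltn_trans (leq_b1 _)) // size_polyXn.
have evx_P : map_poly evx (map_poly polyC P) = map_poly ratr P.
  rewrite -map_poly_comp; apply: eq_map_poly => c /=.
  by rewrite horner_evalE map_polyC hornerC.
have evx_Q : map_poly evx Q = (x ^+ q) *: 'X^q - (ratr A)%:P.
  by rewrite rmorphB /= map_polyZ map_polyXn map_polyC /= !horner_evalE
     map_polyC map_polyXn hornerC hornerXn.
rewrite -[root _ x]/(evx (pow_resultant P A q) == 0) map_resultant; last 2 first.
- rewrite lead_coef_map_eq (monicP monP) ?evxE ?map_polyC ?hornerC ?rmorph1 ?oner_eq0 //.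
  by rewrite fmorph_eq0 oner_eq0.
- by rewrite lead_Q evxE map_polyXn hornerXn expf_neq0.
rewrite evx_P evx_Q resultant_eq0.
have common_root y : root (gcdp (map_poly ratr P) (x ^+ q *: 'X^q - (ratr A)%:P)) y =
    root (map_poly ratr P) y && ((x * y) ^+ q == ratr A).
  by rewrite root_gcd /root !hornerE exprMn subr_eq0.
split=> [/gtn_eqF/closed_rootP[y] | [y Py xy_q]].
  by rewrite common_root => /andP[Py /eqP]; exists y.
apply: (@root_size_gt1 _ y); last by rewrite common_root Py xy_q eqxx.
by rewrite gcdp_eq0 negb_and map_poly_eq0 monic_neq0.
Qed.

Lemma root_conjC_int (B : {poly int}) (z : algC) :
  root (map_poly intr B) z -> root (map_poly intr B) z^*.
Proof.
have conj_B : map_poly Num.Def.conjC (map_poly intr B) = map_poly intr B :> {poly algC}.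
  by rewrite -map_poly_comp; apply: eq_map_poly => c /=; rewrite rmorph_int.
by rewrite -{2}conj_B fmorph_root.
Qed.

Lemma dominant_roots_conj_pair (B : {poly int}) (beta : algC) (q : nat) :
  B \is monic -> irreducible_poly B -> root (map_poly intr B) beta ->
  beta != 0 -> (0 < q)%N -> (beta * beta^*) ^+ q \in Crat ->
  (forall z : algC, root (map_poly intr B) z -> z != beta -> z != beta^* ->
     `|z| < `|beta|) ->
  forall g : algC, root (map_poly intr B) g -> (g == beta) || (g == beta^*).
Proof.
move=> monB irrB Bbeta beta_neq0 q_gt0 /CratP[A DA] dominant g Bg.
pose Bq := map_poly (intr : int -> rat) B.
have BqC : map_poly ratr Bq = map_poly intr B := map_poly_ratr_int B.
have irrBq : irreducible_poly Bq by apply/irreducible_rat_int.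
have monBq : Bq \is monic.
  by rewrite monicE lead_coef_map_eq (monicP monB) ?rmorph1 ?oner_eq0.
have g_neq0 : g != 0.
  apply: contra_neq beta_neq0 => g0; apply/eqP; rewrite -(rootX (R := algC)).
  rewrite -(map_polyX (ratr : {rmorphism rat -> algC})).
  apply: (irreducible_rat_root_transfer irrBq (x := g)); rewrite ?BqC //.
  by rewrite map_polyX rootX g0.
have beta_res : root (map_poly ratr (pow_resultant Bq A q)) beta.
  apply/(root_pow_resultant A q_gt0 beta_neq0 monBq).
  by exists beta^*; rewrite ?BqC ?root_conjC_int.
have /(root_pow_resultant A q_gt0 g_neq0 monBq)[d Bd gd_q] :
    root (map_poly ratr (pow_resultant Bq A q)) g.
  by apply: (irreducible_rat_root_transfer irrBq _ _ beta_res); rewrite BqC.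
rewrite BqC in Bd.
have bounded z : root (map_poly intr B) z -> `|z| <= `|beta|.
  move=> Bz; have [-> // | z_neq] := eqVneq z beta.
  have [-> | z_neq'] := eqVneq z beta^*; first by rewrite norm_conjC.
  exact/ltW/dominant.
have norm_gd : `|g| * `|d| = `|beta| * `|beta|.
  have : `|g * d| = `|beta * beta^*|.
    by apply: (pexpIrn q_gt0); rewrite ?nnegrE // -!normrX gd_q DA.
  by rewrite !normrM norm_conjC.
apply/contraT; rewrite negb_or => /andP[g_neq g_neq'].
have beta_gt0 : 0 < `|beta| by rewrite normr_gt0.
have /lt_eqF/negbT/eqP[] : `|g| * `|d| < `|beta| * `|beta|.
  apply: (le_lt_trans (y := `|g| * `|beta|)); first by rewrite ler_wpM2l ?bounded.
  by rewrite ltr_pM2r ?dominant.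
exact: norm_gd.
Qed.

Lemma separable_two_roots (F : closedFieldType) (P : {poly F}) (x y : F) :
  P \is monic -> separable_poly P -> x != y ->
  (forall z, root P z = (z == x) || (z == y)) ->
  P = ('X - x%:P) * ('X - y%:P).
Proof.
move=> monP sepP xy rootP.
have [rs DP] := closed_field_poly_normal P.
rewrite (monicP monP) scale1r in DP.
have uniq_rs : uniq rs by rewrite -separable_prod_XsubC -DP.
have perm_rs : perm_eq rs [:: x; y].
  apply: uniq_perm; rewrite /= ?inE ?xy // => z.
  by rewrite -root_prod_XsubC -DP rootP !inE.
by rewrite DP (perm_big _ perm_rs) !big_cons big_nil /= mulr1.
Qed.

Lemma quadratic_coef (R : nzRingType) (u v : R) :
  ('X^2 + u%:P * 'X + v%:P)`_1 = u /\ ('X^2 + u%:P * 'X + v%:P)`_0 = v.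
Proof. by rewrite !coefD !coefXn !coefCM !coefX !coefC /= mulr1 mulr0 !add0r !addr0. Qed.

Lemma int_quadratic_roots (B : {poly int}) (x y : algC) :
  map_poly intr B = ('X - x%:P) * ('X - y%:P) ->
  [/\ B = 'X^2 + (B`_1)%:P * 'X + (B`_0)%:P,
      (B`_1)%:~R = - (x + y) & (B`_0)%:~R = x * y].
Proof.
move=> DB.
have expand : ('X - x%:P) * ('X - y%:P) = 'X^2 + (- (x + y))%:P * 'X + (x * y)%:P.
  by rewrite rmorphN rmorphD rmorphM /=; ring.
have [coef1 coef0] := quadratic_coef (- (x + y)) (x * y).
have Dcoef i : (B`_i)%:~R = (map_poly intr B)`_i :> algC by rewrite coef_map.
have B1 : (B`_1)%:~R = - (x + y) by rewrite Dcoef DB expand coef1.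
have B0 : (B`_0)%:~R = x * y by rewrite Dcoef DB expand coef0.
split=> //; apply: (map_inj_poly (intr_inj (R := algC))) => //.
by rewrite DB expand !rmorphD /= map_polyXn [in RHS]rmorphM /= map_polyX !map_polyC /= B1 B0.
Qed.

(* A rational root of an integer is an integer (it is an algebraic integer). *)
Lemma Crat_root_int (c : algC) (n : nat) (N : int) :
  (0 < n)%N -> c \in Crat -> c ^+ n = N%:~R -> c \in Num.int.
Proof.
move=> n_gt0 c_rat cn.
have c_root : root ('X^n - (N%:~R)%:P) c by rewrite /root !hornerE cn subrr.
apply: (Cint_rat_Aint c_rat); apply: (root_monic_Aint c_root).
  exact: monicXnsubC.
by rewrite polyOverXnsubC rpred_int.
Qed.

(* If N^q = A^p with p, q coprime and N, A > 0, then N and A are the p-th and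
   q-th powers of a common integer b = A^k / N^a, where k q = 1 + a p. *)
Lemma coprime_pow_eq (N A : int) (p q : nat) :
  0 < N -> 0 < A -> (0 < p)%N -> (0 < q)%N -> coprime p q -> N ^+ q = A ^+ p ->
  exists2 b : int, 0 < b & N = b ^+ p /\ A = b ^+ q.
Proof.
move=> N_gt0 A_gt0 p_gt0 q_gt0 co_pq NA.
have [a _ /dvdnP[k bezout]] := Bezoutl p q_gt0.
rewrite gcdnC (eqP co_pq) in bezout.
pose NC : algC := N%:~R; pose AC : algC := A%:~R.
have NC_unit k' : NC ^+ k' != 0 by rewrite expf_neq0 // intr_eq0 gt_eqF.
have AC_unit k' : AC ^+ k' != 0 by rewrite expf_neq0 // intr_eq0 gt_eqF.
have NAC : NC ^+ q = AC ^+ p by rewrite -!rmorphXn /= NA.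
pose b := AC ^+ k / NC ^+ a.
have A_kp : AC ^+ (k * p) = NC ^+ (a * p).+1.
  by rewrite mulnC exprM -NAC -exprM -add1n bezout mulnC.
have N_aq : NC ^+ (a * q) = AC ^+ (a * p) by rewrite mulnC exprM NAC -exprM mulnC.
have bp : b ^+ p = NC.
  by rewrite exprMn exprVn -!exprM A_kp exprS mulfK ?NC_unit.
have bq : b ^+ q = AC.
  by rewrite exprMn exprVn -!exprM N_aq -bezout exprD expr1 mulfK ?AC_unit.
have /intrP[b' Db] : b \in Num.int.
  by apply: (Crat_root_int p_gt0 _ bp); rewrite rpred_div ?rpredX ?rpred_int.
have b_gt0 : 0 < b by rewrite divr_gt0 ?exprn_gt0 ?ltr0z.
exists b'; first by rewrite -(ltr0z algC) -Db.
by split; apply: (intr_inj (R := algC)); rewrite rmorphXn /= -Db ?bp ?bq.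
Qed.

Lemma pow_decomposition (alpha N : int) (p q : nat) :
  0 < N -> 1 < `|alpha| -> (0 < p)%N -> (0 < q)%N -> coprime p q ->
  alpha ^+ (2 * p) = N ^+ q ->
  exists b : int,
    [/\ 1 < b, N = b ^+ p,
        (`|alpha|%:~R : algC) = sqrtC (b%:~R) ^+ q &
        ((~ exists c : int, b = c ^+ 2) -> ~~ odd q)].
Proof.
move=> N_gt0 alpha_gt1 p_gt0 q_gt0 co_pq alphaN.
have alpha_gt0 : 0 < `|alpha| := lt_trans ltr01 alpha_gt1.
have alpha2 : alpha ^+ 2 = `|alpha| ^+ 2 by rewrite real_normK ?num_real.
have [b b_gt0 [Nb alpha_b]] : exists2 b : int, 0 < b & N = b ^+ p /\ alpha ^+ 2 = b ^+ q.
  apply: coprime_pow_eq => //; first by rewrite alpha2 exprn_gt0.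
  by rewrite -alphaN exprM.
exists b; split => //.
- rewrite ltNge; apply/negP => b_le1.
  have := exprn_ile1 q (ltW b_gt0) b_le1.
  by rewrite -alpha_b alpha2 leNgt exprn_egt1.
- apply: (pexpIrn (isT : (0 < 2)%N)); rewrite ?nnegrE ?exprn_ge0 ?sqrtC_ge0 ?ler0z ?ltW //.
  by rewrite -exprM mulnC exprM sqrtCK -[in RHS]rmorphXn /= -alpha_b alpha2 rmorphXn.
- move=> not_square; apply/negP => odd_q; apply: not_square.
  have [c _ [b_c _]] : exists2 c : int, 0 < c & b = c ^+ 2 /\ `|alpha| = c ^+ q.
    by apply: coprime_pow_eq; rewrite ?coprime2n // -alpha2.
  by exists c.
Qed.

Lemma conj_discriminant (z : algC) :
  (z + z^*) ^+ 2 - 4 * (z * z^*) = - `|z - z^*| ^+ 2.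
Proof. by rewrite normCK rmorphB /= conjCK; ring. Qed.

Theorem mainTheorem6 (B : {poly int}) (beta : algC) (alpha : int) (p q : nat) :
  B \is monic ->
  irreducible_poly B ->
  root (map_poly intr B) beta ->
  beta \notin Num.real ->
  (forall z : algC, root (map_poly intr B) z -> z != beta -> z != beta^* ->
     `|z| < `|beta|) ->
  1 < `|alpha| ->
  (0 < p)%N -> (0 < q)%N -> coprime p q ->
  (alpha%:~R : algC) ^+ (2 * p) = (beta * beta^*) ^+ q ->
  exists a N : int,
    [/\ 0 < N,
        B = 'X^2 + a%:P * 'X + N%:P,
        a ^+ 2 - 4 * N < 0 &
        exists b : int,
          [/\ 1 < b, N = b ^+ p,
              (`|alpha|%:~R : algC) = sqrtC (b%:~R) ^+ q &
              ((~ exists c : int, b = c ^+ 2) -> ~~ odd q)]].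
Proof.
move=> monB irrB Bbeta beta_nreal dominant alpha_gt1 p_gt0 q_gt0 co_pq alpha_beta.
have beta_neq_conj : beta != beta^* by move: beta_nreal; rewrite CrealE eq_sym.
have beta_neq0 : beta != 0 by apply: contraNneq beta_nreal => ->; rewrite real0.
have norm_rat : (beta * beta^*) ^+ q \in Crat by rewrite -alpha_beta rpredX ?rpred_int.
have roots_B z : root (map_poly intr B) z = (z == beta) || (z == beta^*).
  apply/idP/idP; last by case/orP=> /eqP->; rewrite ?root_conjC_int.
  exact: (dominant_roots_conj_pair monB irrB Bbeta beta_neq0 q_gt0 norm_rat dominant).
have sepB : separable_poly (map_poly intr B : {poly algC}).
  by rewrite -map_poly_ratr_int separable_map irreducible_rat_separable ?irreducible_rat_int.
have monBC : (map_poly intr B : {poly algC}) \is monic.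
  by rewrite monicE lead_coef_map_eq (monicP monB) ?rmorph1 ?oner_eq0.
have [DB a_val N_val] :=
  int_quadratic_roots (separable_two_roots monBC sepB beta_neq_conj roots_B).
have N_gt0 : 0 < B`_0 by rewrite -(ltr0z algC) N_val -normCK exprn_gt0 // normr_gt0.
exists B`_1, B`_0; split => //.
  rewrite -(ltrz0 algC) rmorphB rmorphXn rmorphM /= a_val N_val sqrrN conj_discriminant.
  by rewrite oppr_lt0 exprn_gt0 // normr_gt0 subr_eq0.
apply: pow_decomposition => //; apply: (intr_inj (R := algC)).
by rewrite !rmorphXn /= alpha_beta N_val.
Qed.
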